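(* Let $A$ and $B$ be disjoint cubic graphs with $v(A)\equiv 0\pmod 6$ and $v(B)\equiv 0\pmod 6$, let $a\in V(A)$ with $N(a,A)=\{a_1,a_2,a_3\}$ and $b\in V(B)$ with $N(b,B)=\{b_1,b_2,b_3\}$, and let $H=Aa\sigma bB$ where $\sigma(a_i)=b_i$ for $i\in\{1,2,3\}$. Suppose $A$ has no $\Lambda$-factor containing the edge $aa_1$. Then $v(H)\equiv 4\pmod 6$ and $H-b_2$ has no $\Lambda$-factor avoiding the edge $h=a_3b_3$ (i.e. every $\Lambda$-factor of $H-b_2$ contains $h$).
   Context: Graphs are finite, undirected, without loops or multiple edges; $v(G)=|V(G)|$; $N(x,G)$ is the set of neighbours of $x$. For disjoint graphs $A,B$, vertices $a,b$ and a bijection $\sigma:N(a,A)\to N(b,B)$, $Aa\sigma bB$ is $(A-a)\cup(B-b)$ together with the new edges $\{x\sigma(x): x\in N(a,A)\}$. $H-b_2$ denotes deletion of the vertex $b_2$. A $\Lambda$-factor of a graph is a spanning subgraph each of whose components is a path on 3 vertices. *)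

From mathcomp Require Import all_boot.
Set Implicit Arguments. Unset Strict Implicit. Unset Printing Implicit Defensive.

Definition simple_graph (T : finType) (e : rel T) : Prop :=
  symmetric e /\ irreflexive e.

Definition nbhd (T : finType) (e : rel T) (x : T) : {set T} := [set y | e x y].

Definition cubic (T : finType) (e : rel T) : Prop :=
  forall x : T, #|nbhd e x| = 3.

(* A Lambda-factor of (T,e): a spanning subgraph with edge relation f
   (f symmetric, f contained in e) each of whose connected components is a
   path on 3 vertices x - y - z. *)
Definition Lambda_factor (T : finType) (e f : rel T) : Prop :=
  [/\ forall x y, f x y -> e x y,
      symmetric f &
      forall v : T, exists x y z : T,
        [/\ [&& x != y, y != z & x != z],
            [set w | connect f v w] = [set x; y; z] &
            [&& f x y, f y z & ~~ f x z]]].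

(* Vertex set of A a sigma b B : (V(A) - a) disjoint-union (V(B) - b). *)
Definition VH (TA TB : finType) (a : TA) (b : TB) : finType :=
  ({x : TA | x != a} + {y : TB | y != b})%type.

(* Edges of A a sigma b B, where sigma : N(a,A) -> N(b,B) is given as a
   function TA -> TB (only its values on N(a,A) matter). *)
Definition join_edge (TA TB : finType) (eA : rel TA) (a : TA)
    (eB : rel TB) (b : TB) (sigma : TA -> TB) : rel (VH a b) :=
  fun u v =>
    match u, v with
    | inl x, inl x' => eA (val x) (val x')
    | inr y, inr y' => eB (val y) (val y')
    | inl x, inr y => eA a (val x) && (sigma (val x) == val y)
    | inr y, inl x => eA a (val x) && (sigma (val x) == val y)
    end.

Definition orig (TA TB : finType) (a : TA) (b : TB) (u : VH a b) : TA + TB :=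
  match u with inl x => inl (val x) | inr y => inr (val y) end.

Definition del_vertex (T : finType) (w : T) : finType := {x : T | x != w}.
Definition del_edge (T : finType) (e : rel T) (w : T) : rel (del_vertex w) :=
  fun u v => e (val u) (val v).
Arguments join_edge {TA TB} eA a eB b sigma.
Arguments del_edge {T} e w.

From mathcomp Require Import all_boot zify.
Set Implicit Arguments. Unset Strict Implicit. Unset Printing Implicit Defensive.

(* In H - b2 the only edges between the A-side (the vertices of A - a) and the
   B-side are a1b1 and a3b3. The A-side has v(A) - 1 = 2 (mod 3) vertices, so a
   Lambda-factor f of H - b2 avoiding a3b3 must use a1b1; counting once more,
   the component of f through a1b1 meets the B-side only in b1. Hence the
   A-side together with b1 is a union of components of f, and renaming b1
   back to a turns f into a Lambda-factor of A containing aa1. *)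

Section ClosedSets.

Variables (T : finType) (f : rel T).
Hypothesis sym_f : symmetric f.

Lemma dvdn_card_closed (k : nat) (S : {set T}) :
  (forall v, #|[set w | connect f v w]| = k) -> closed f S -> k %| #|S|.
Proof.
move=> card_comp clS.
have sym_c := sym_connect_sym sym_f.
have eqv : {in S & &, equivalence_rel (connect f)}.
  by move=> x y z _ _ _; split=> // /(same_connect sym_c); apply.
rewrite (card_uniform_partition (n := k) _ (equivalence_partitionP eqv)).
  exact: dvdn_mull.
move=> _ /imsetP[x Sx ->]; rewrite -(card_comp x); apply: eq_card => w.
by rewrite !inE andb_idl // => /(closed_connect clS) <-.
Qed.

Lemma card_Lambda_component (e : rel T) :
  Lambda_factor e f -> forall v, #|[set w | connect f v w]| = 3.
Proof.
case=> _ _ comp_f v; have [x [y [z [/and3P[xy yz xz] -> _]]]] := comp_f v.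
rewrite [_ :|: _]setUC cardsU1 cards2 xy !inE negb_or eq_sym xz eq_sym yz.
by [].
Qed.

End ClosedSets.

Section Pullback.

Variables (T T' : finType) (f : rel T) (phi : T' -> T).
Hypothesis phi_inj : injective phi.
Hypothesis phi_closed : forall x y, f (phi x) y -> y \in codom phi.

Lemma connect_codom x t :
  connect f (phi x) t -> exists2 y, t = phi y & connect (relpre phi f) x y.
Proof.
case/connectP=> p; elim: p x => [|s p IHp] x /=; first by move=> _ ->; exists x.
case/andP=> fxs; case/codomP: (phi_closed fxs) => y ey; subst s.
move=> /IHp /[apply] -[z -> cyz]; exists z => //.
exact: connect_trans (connect1 fxs) cyz.
Qed.

Lemma connect_relpre x y :
  connect (relpre phi f) x y = connect f (phi x) (phi y).
Proof.
apply/idP/idP=> [/connectP[p fp ->] | /connect_codom[z /phi_inj -> //]].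
by apply/connectP; exists (map phi p); rewrite ?path_map ?last_map.
Qed.

Lemma Lambda_factor_relpre (e : rel T) (e' : rel T') :
  (forall x y, f (phi x) (phi y) -> e' x y) ->
  Lambda_factor e f -> Lambda_factor e' (relpre phi f).
Proof.
move=> fe' [_ sym_f comp_f]; split=> // [x y | v]; first exact: sym_f.
have [x [y [z [xyz comp_v fxyz]]]] := comp_f (phi v).
have in_codom t : t \in [set x; y; z] -> t \in codom phi.
  by rewrite -comp_v inE => /connect_codom[t' -> _]; apply: codom_f.
have /codomP[x' ex] : x \in codom phi by apply: in_codom; rewrite !inE eqxx.
have /codomP[y' ey] : y \in codom phi by apply: in_codom; rewrite !inE eqxx ?orbT.
have /codomP[z' ez] : z \in codom phi by apply: in_codom; rewrite !inE eqxx ?orbT.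
subst x y z; exists x', y', z'; rewrite /= !(inj_eq phi_inj) in xyz fxyz *.
split=> //; apply/setP=> w.
move/setP: comp_v => /(_ (phi w)).
by rewrite !inE connect_relpre !(inj_eq phi_inj).
Qed.

End Pullback.

Section Join.

Variables (TA TB : finType) (eA : rel TA) (eB : rel TB) (a : TA) (b : TB).

Lemma orig_inj : injective (@orig TA TB a b).
Proof. by case=> [x|y] [x'|y'] //= [] /val_inj ->. Qed.

Lemma card_VH : #|VH a b| = #|TA|.-1 + #|TB|.-1.
Proof. by rewrite card_sum !card_sig -(cardC1 a) -(cardC1 b). Qed.

Variables (a1 a2 a3 : TA) (b1 b2 b3 : TB) (sigma : TA -> TB).
Variable c : {y : TB | y != b}.
Hypotheses (simple_A : simple_graph eA) (irr_B : irreflexive eB).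
Hypothesis nbhd_a : nbhd eA a = [set a1; a2; a3].
Hypotheses (sigma1 : sigma a1 = b1) (sigma2 : sigma a2 = b2) (sigma3 : sigma a3 = b3).
Hypothesis c_b2 : val c = b2.
Hypothesis card_A : 3 %| #|TA|.

Local Notation D := (del_vertex (inr c : VH a b)).
Local Notation H := (del_edge (join_edge eA a eB b sigma) (inr c)).

Definition inA (p : {x : TA | x != a}) : D := exist _ (inl p) isT.

Definition sideA : {set D} := [set inA p | p : {x : TA | x != a}].

Definition liftA (v : D) (x : TA) : D := if insub x is Some p then inA p else v.

Lemma inA_inj : injective inA.
Proof. by move=> p q /(congr1 val) [->]. Qed.

Lemma inA_sideA p : inA p \in sideA.
Proof. by apply/imsetP; exists p. Qed.

Lemma card_sideA : #|sideA| = #|TA|.-1.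
Proof. by rewrite card_imset ?cardsT ?card_sig -?(cardC1 a) //; apply: inA_inj. Qed.

Lemma notin_sideA u : u \notin sideA -> exists y, val u = inr y.
Proof.
case: u => [[p|y] hu] /= notA; last by exists y.
by case/imsetP: notA; exists p => //; apply: val_inj.
Qed.

Lemma join_cross_edge u v : H u v -> u \in sideA -> v \notin sideA ->
  (orig (val u) = inl a1 /\ orig (val v) = inr b1) \/
  (orig (val u) = inl a3 /\ orig (val v) = inr b3).
Proof.
move=> + /imsetP[p _ eu] /notin_sideA[y vy]; subst u.
rewrite /del_edge vy /= => /andP[].
have -> : eA a (val p) = (val p \in nbhd eA a) by rewrite inE.
rewrite nbhd_a !inE -orbA => /or3P[] /eqP-> /eqP sy.
- by left; rewrite -sy sigma1.
- case/negP: (valP v); rewrite vy; apply/eqP; congr inr.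
  by apply: val_inj; rewrite /= -sy sigma2 c_b2.
- by right; rewrite -sy sigma3.
Qed.

Variant liftA_spec (v : D) : TA -> D -> Type :=
  | LiftA_a : liftA_spec v a v
  | LiftA_inA p : liftA_spec v (val p) (inA p).

Lemma liftAP v x : liftA_spec v x (liftA v x).
Proof.
rewrite /liftA; case: insubP => [p _ <- | ]; first exact: LiftA_inA.
by rewrite negbK => /eqP ->; apply: LiftA_a.
Qed.

Lemma liftA_a v : liftA v a = v.
Proof. by rewrite /liftA insubF ?eqxx. Qed.

Lemma liftA_val v p : liftA v (val p) = inA p.
Proof. by rewrite /liftA valK. Qed.

Lemma liftA_inj v : v \notin sideA -> injective (liftA v).
Proof.
move=> vA x y; case: liftAP => [|p]; case: liftAP => [|q] //.
- by move=> ev; case/negP: vA; rewrite ev inA_sideA.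
- by move=> ev; case/negP: vA; rewrite -ev inA_sideA.
- by move/inA_inj ->.
Qed.

Let card_sideA_mod3 : #|sideA| %% 3 = 2.
Proof.
have : 0 < #|TA| by apply/card_gt0P; exists a.
by rewrite card_sideA; move: card_A; lia.
Qed.

Section Factor.

Variable f : rel D.
Hypothesis f_factor : Lambda_factor H f.
Hypothesis f_avoids_h :
  ~ exists u v, [/\ f u v, orig (val u) = inl a3 & orig (val v) = inr b3].

Let sym_f : symmetric f. Proof. by case: f_factor. Qed.

Lemma factor_cross_edge u v : f u v -> u \in sideA -> v \notin sideA ->
  orig (val u) = inl a1 /\ orig (val v) = inr b1.
Proof.
case: f_factor => f_H _ _ fuv uA vA.
case: (join_cross_edge (f_H _ _ fuv) uA vA) => // -[ou ov].
by case: f_avoids_h; exists u, v.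
Qed.

Lemma factor_leaves_sideA : exists u v, [/\ f u v, u \in sideA & v \notin sideA].
Proof.
have [/existsP[u /existsP[v /and3P[]]] | none] :=
  boolP [exists u, exists v, [&& f u v, u \in sideA & v \notin sideA]].
  by exists u, v.
have clA : closed f sideA.
  apply: (intro_closed (sym_connect_sym sym_f)) => x y fxy xA.
  apply: contraNT none => yA; apply/existsP; exists x; apply/existsP; exists y.
  by rewrite fxy xA yA.
have := dvdn_card_closed sym_f (card_Lambda_component f_factor) clA.
by move: card_sideA_mod3; lia.
Qed.

Lemma closed_sideA_cross u1 v1 : f u1 v1 -> u1 \in sideA -> v1 \notin sideA ->
  closed f (sideA :|: [set v1]).
Proof.
move=> fuv uA vA; set C := [set w | connect f u1 w].
have clX : closed f (sideA :|: C).
  apply: (intro_closed (sym_connect_sym sym_f)) => x y fxy; rewrite !inE.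
  case/orP=> [xA | cx]; last by rewrite (connect_trans cx (connect1 fxy)) orbT.
  apply/orP; have [yA | yA] := boolP (y \in sideA); [by left | right].
  have [_ oy] := factor_cross_edge fxy xA yA.
  have [_ ov] := factor_cross_edge fuv uA vA.
  have -> : y = v1 by apply/val_inj/orig_inj; rewrite oy ov.
  by rewrite connect1 ?orbT.
have v1C : v1 \in C :\: sideA by rewrite !inE vA connect1.
have u1C : u1 \in C :&: sideA by rewrite !inE uA connect0.
have /cards1P[w Cw] : #|C :\: sideA| == 1.
  have := dvdn_card_closed sym_f (card_Lambda_component f_factor) clX.
  have := cardsUI sideA C; have := cardsID sideA C.
  rewrite setIC (card_Lambda_component f_factor).
  have : 0 < #|C :&: sideA| by apply/card_gt0P; exists u1.
  have : 0 < #|C :\: sideA| by apply/card_gt0P; exists v1.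
  move: card_sideA_mod3; lia.
suff -> : sideA :|: [set v1] = sideA :|: C by [].
have ew : w = v1 by apply/esym/set1P; rewrite -Cw.
apply/setP=> x; move/setP/(_ x): Cw; rewrite ew !inE.
by case: (x \in sideA).
Qed.

Lemma Lambda_factor_through_aa1 : exists g : rel TA, Lambda_factor eA g /\ g a a1.
Proof.
have [u1 [v1 [fuv uA vA]]] := factor_leaves_sideA.
have [ou _] := factor_cross_edge fuv uA vA.
have [p _ eu] := imsetP uA; subst u1.
have [pa1] : inl (val p) = inl a1 := ou.
have u1E : liftA v1 a1 = inA p by rewrite -pa1 liftA_val.
have clX := closed_sideA_cross fuv uA vA.
have liftA_closed x y : f (liftA v1 x) y -> y \in codom (liftA v1).
  move=> fxy; have : liftA v1 x \in sideA :|: [set v1].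
    by case: liftAP => [|q]; rewrite !inE ?eqxx ?orbT ?inA_sideA.
  rewrite (clX _ _ fxy) !inE => /orP[/imsetP[q _ ->] | /eqP ->].
    by apply/codomP; exists (val q); rewrite liftA_val.
  by apply/codomP; exists a; rewrite liftA_a.
have [f_H _ _] := f_factor.
have eaa1 : eA a a1.
  by move/setP/(_ a1): (nbhd_a); rewrite !inE eqxx => ->.
have cross_to_v1 q : f (inA q) v1 -> val q = a1.
  by move=> /factor_cross_edge/(_ (inA_sideA q) vA) [] [].
exists (relpre (liftA v1) f); split; last by rewrite /= liftA_a u1E sym_f.
apply: (Lambda_factor_relpre (liftA_inj vA) liftA_closed _ f_factor).
move=> x y; case: liftAP => [|q]; case: liftAP => [|r].
- have [y' vy] := notin_sideA vA.
  by move/f_H; rewrite /del_edge vy /= irr_B.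
- by rewrite sym_f => /cross_to_v1 ->.
- by move/cross_to_v1 ->; case: simple_A => symA _; rewrite symA.
- exact: f_H.
Qed.

End Factor.

Lemma Lambda_factor_del_contains_h f :
  ~ (exists g : rel TA, Lambda_factor eA g /\ g a a1) -> Lambda_factor H f ->
  exists u v, [/\ f u v, orig (val u) = inl a3 & orig (val v) = inr b3].
Proof.
move=> noA Lf.
have [/existsP[u /existsP[v /and3P[fuv /eqP ou /eqP ov]]] | no_h] := boolP
  [exists u, exists v, [&& f u v, orig (val u) == inl a3 & orig (val v) == inr b3]].
  by exists u, v.
case: noA; apply: Lambda_factor_through_aa1 Lf _ => -[u [v [fuv ou ov]]].
case/negP: no_h; apply/existsP; exists u; apply/existsP; exists v.
by rewrite fuv ou ov !eqxx.
Qed.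

End Join.

Theorem mainTheorem10
  (TA TB : finType) (eA : rel TA) (eB : rel TB)
  (a a1 a2 a3 : TA) (b b1 b2 b3 : TB) (sigma : TA -> TB)
  (b2H : VH a b) :
  simple_graph eA -> simple_graph eB -> cubic eA -> cubic eB ->
  #|TA| %% 6 = 0 -> #|TB| %% 6 = 0 ->
  nbhd eA a = [set a1; a2; a3] -> nbhd eB b = [set b1; b2; b3] ->
  sigma a1 = b1 -> sigma a2 = b2 -> sigma a3 = b3 ->
  orig b2H = inr b2 ->
  ~ (exists f : rel TA, Lambda_factor eA f /\ f a a1) ->
  #|VH a b| %% 6 = 4 /\
  (forall f : rel (del_vertex b2H),
     Lambda_factor (del_edge (join_edge eA a eB b sigma) b2H) f ->
     exists u v : del_vertex b2H,
       [/\ f u v, orig (val u) = inl a3 & orig (val v) = inr b3]).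
Proof.
move=> simple_A [_ irr_B] _ _ card_A card_B nbhd_a _ sigma1 sigma2 sigma3.
move=> orig_b2 noA; have A_gt0 : 0 < #|TA| by apply/card_gt0P; exists a.
split.
  have : 0 < #|TB| by apply/card_gt0P; exists b.
  by rewrite card_VH; lia.
have card3_A : 3 %| #|TA| by lia.
case: b2H orig_b2 => [//|c] [c_b2] f.
exact: Lambda_factor_del_contains_h simple_A irr_B nbhd_a sigma1 sigma2 sigma3
  c_b2 card3_A f noA.
Qed.
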